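(* Let $G$ be a simple, undirected, connected graph on $N$ vertices with edge set $E$, and let $R=\max_{i,j}R_{ij}$. Then $$R^+(G)\le 2|E|(N-1)R.$$
   Context: For vertices $i,j$ of $G$, $R_{ij}$ denotes the effective resistance between $i$ and $j$ when every edge of $G$ is a unit resistor. The additive degree-Kirchhoff index is $R^+(G)=\sum_{i<j}(d_i+d_j)R_{ij}$, where $d_i$ is the degree of vertex $i$. *)

From Stdlib Require Import ClassicalEpsilon.
From mathcomp Require Import all_boot all_order all_algebra.
Set Implicit Arguments. Unset Strict Implicit. Unset Printing Implicit Defensive.
Import Order.TTheory GRing.Theory Num.Theory.
Local Open Scope ring_scope.

Definition simple_graph (N : nat) (e : rel 'I_N) : Prop :=
  symmetric e /\ irreflexive e.

Definition connected_graph (N : nat) (e : rel 'I_N) : Prop :=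
  forall x y : 'I_N, connect e x y.

Definition deg (N : nat) (e : rel 'I_N) (i : 'I_N) : nat := #|[set j | e i j]|.

Definition nedges (N : nat) (e : rel 'I_N) : nat :=
  #|[set p : 'I_N * 'I_N | e p.1 p.2 && (p.1 < p.2)%N]|.

(* x is a vector of node potentials when a unit current enters at i and leaves
   at j, every edge being a unit resistor (Kirchhoff: L x = e_i - e_j). *)
Definition unit_current_potential (R : pzRingType) (N : nat) (e : rel 'I_N)
  (i j : 'I_N) (x : 'I_N -> R) : Prop :=
  forall v : 'I_N,
    \sum_(u | e v u) (x v - x u) = (v == i)%:R - (v == j)%:R.

(* Effective resistance R_ij = x_i - x_j for such a potential vector x
   (well defined for connected graphs; chosen by Hilbert epsilon). *)
Definition eff_res (R : pzRingType) (N : nat) (e : rel 'I_N) (i j : 'I_N) : R :=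
  epsilon (inhabits 0)
    (fun r : R => exists x : 'I_N -> R,
        unit_current_potential e i j x /\ r = x i - x j).

(* R = max_{i,j} R_ij  (all R_ij >= 0, R_ii = 0, so 0 is a harmless seed) *)
Definition max_eff_res (R : realDomainType) (N : nat) (e : rel 'I_N) : R :=
  \big[Num.max/0]_(i < N) \big[Num.max/0]_(j < N) eff_res R e i j.

Definition add_deg_kirchhoff (R : realDomainType) (N : nat) (e : rel 'I_N) : R :=
  \sum_(i < N) \sum_(j < N | (i < j)%N)
     ((deg e i + deg e j)%:R * eff_res R e i j).

(* Every R_ij is at most R and every coefficient d_i + d_j is nonnegative, so
   R^+(G) <= R * sum_{i<j} (d_i + d_j).  Each vertex i occurs in exactly N - 1
   of the pairs {i, j}, hence that sum is (N - 1) * sum_i d_i = (N - 1) * 2|E|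
   by the handshake lemma. *)
From mathcomp Require Import all_boot all_order all_algebra.
Set Implicit Arguments. Unset Strict Implicit. Unset Printing Implicit Defensive.
Import Order.TTheory GRing.Theory Num.Theory.
Local Open Scope ring_scope.

Lemma sum_lt_pairs_addn (N : nat) (f : 'I_N -> nat) :
  (\sum_(i < N) \sum_(j < N | (i < j)%N) (f i + f j) = (N - 1) * \sum_(i < N) f i)%N.
Proof.
under eq_bigr do rewrite big_split.
rewrite big_split /= [X in (_ + X)%N](exchange_big_dep xpredT) //=.
rewrite -big_split big_distrr /=; apply: eq_bigr => i _.
have -> : ((N - 1) * f i = \sum_(j < N | j != i) f i)%N.
  by rewrite sum_nat_const cardC1 card_ord subn1 mulnC.
rewrite [RHS](bigID (fun j : 'I_N => (i < j)%N)) /=.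
by congr (_ + _); apply: eq_bigl => j; rewrite -(inj_eq val_inj) /=; case: ltngtP.
Qed.

Lemma degE (N : nat) (e : rel 'I_N) (i : 'I_N) :
  deg e i = (\sum_(j < N) e i j)%N.
Proof.
rewrite /deg -sum1_card big_mkcond /=.
by apply: eq_bigr => j _; rewrite inE; case: (e i j).
Qed.

Lemma nedgesE (N : nat) (e : rel 'I_N) :
  nedges e = (\sum_(i < N) \sum_(j < N) (e i j && (i < j)%N))%N.
Proof.
rewrite /nedges -sum1_card big_mkcond /= [RHS]pair_big /=.
by apply: eq_bigr => -[i j] _; rewrite inE /=; case: (_ && _).
Qed.

Lemma handshake (N : nat) (e : rel 'I_N) :
  simple_graph e -> (\sum_(i < N) deg e i = 2 * nedges e)%N.
Proof.
move=> [sym irr].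
have split_edge i j : e i j = ((e i j && (i < j)) + (e j i && (j < i)))%N :> nat.
  by rewrite (sym j i); case: (ltngtP i j) => [_|_|/val_inj ->];
    rewrite ?andbF ?andbT ?addn0 ?irr.
rewrite (eq_bigr (fun i => \sum_(j < N) (e i j && (i < j)%N)
                          + \sum_(j < N) (e j i && (j < i)%N))%N); last first.
  by move=> i _; rewrite degE -big_split; apply: eq_bigr => j _; apply: split_edge.
by rewrite big_split /= [X in (_ + X)%N]exchange_big /= -nedgesE addnn mul2n.
Qed.

Lemma le_max_eff_res (R : realDomainType) (N : nat) (e : rel 'I_N) (i j : 'I_N) :
  eff_res R e i j <= max_eff_res R e.
Proof.
apply: le_trans (le_bigmax _ _ i).
exact: (le_bigmax _ (fun j => eff_res R e i j) j).
Qed.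

Theorem theorem6 (R : realFieldType) (N : nat) (e : rel 'I_N) :
  simple_graph e -> connected_graph e ->
  add_deg_kirchhoff R e <= (2 * nedges e * (N - 1))%:R * max_eff_res R e.
Proof.
move=> simple_e _.
(* Abstracting the maximum keeps [ler_wpM2l] from unifying two different
   coercion paths from [realFieldType] to its ring, which does not terminate
   in reasonable time. *)
set M := max_eff_res R e.
have le_M i j : eff_res R e i j <= M := le_max_eff_res R e i j.
rewrite /add_deg_kirchhoff -(handshake simple_e) mulnC -sum_lt_pairs_addn.
rewrite natr_sum mulr_suml; apply: ler_sum => i _.
rewrite natr_sum mulr_suml; apply: ler_sum => j _.
exact: (ler_wpM2l (ler0n _ _) (le_M i j)).
Qed.
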